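(* Let $G$ be a cubic graph of order $n\ge 6$ and $A$ a cubic graph of order $4r$ ($r$ a positive integer). Then for any graph $G\circ A^-$, \[c_2(G\circ A^-)-\left\lceil\frac{|V(G\circ A^-)|+2}{4}\right\rceil\ge\left\lfloor\frac{n-2}{4}\right\rfloor.\]
   Context: Let $G$ and $A$ be $3$-regular graphs, let $a$ be a vertex of $A$ and $A^-=A-a$. A graph $G\circ A^-$ is any graph obtained by replacing each vertex $v$ of $G$ by a copy $A^-_v$ of $A^-$ and, for each edge $uv$ of $G$, adding an edge joining a vertex of degree $2$ of $A^-_u$ to a vertex of degree $2$ of $A^-_v$, so that each degree-$2$ vertex of each copy is incident with exactly one added edge (the choices of $a$ and of these edges are arbitrary). For a graph $H=(V,E)$ and $S_0\subseteq V$, the irreversible $2$-threshold conversion process sets $S_t=S_{t-1}\cup\{v: v \text{ has at least } 2 \text{ neighbours in } S_{t-1}\}$ for $t\ge1$; $S_0$ is a $2$-conversion set if $S_t=V$ for some $t$, and $c_2(H)$ is the minimum size of a $2$-conversion set. *)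

From mathcomp Require Import all_boot.
From Stdlib Require Import ClassicalDescription.
Set Implicit Arguments. Unset Strict Implicit. Unset Printing Implicit Defensive.

Definition simple_graph (T : finType) (e : rel T) : Prop :=
  symmetric e /\ irreflexive e.

Definition nbhd (T : finType) (e : rel T) (x : T) : {set T} := [set y | e x y].

Definition cubic (T : finType) (e : rel T) : Prop :=
  simple_graph e /\ forall x, #|nbhd e x| = 3.

(* Vertices: pairs (v, x) with v in V(G), x in V(A) - a; the copy A^-_v is
   {(v, x) | x <> a}. *)
Notation circV TG a := {p : (TG * _)%type | p.2 != a}.

Definition deg2_in_Aminus (TA : finType) (eA : rel TA) (a x : TA) : bool :=
  (x != a) && (#|[set y | eA x y && (y != a)]| == 2).

(* M is an admissible set of added edges *)
Definition circ_matching (TG TA : finType) (eG : rel TG) (eA : rel TA) (a : TA)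
  (M : rel (circV TG a)) : Prop :=
  symmetric M /\
  (forall p q : circV TG a, M p q ->
     [/\ eG (val p).1 (val q).1, deg2_in_Aminus eA a (val p).2
       & deg2_in_Aminus eA a (val q).2]) /\
  (forall u v : TG, eG u v ->
     #|[set pq : circV TG a * circV TG a |
         [&& M pq.1 pq.2, (val pq.1).1 == u & (val pq.2).1 == v]]| = 1) /\
  (forall p : circV TG a, deg2_in_Aminus eA a (val p).2 ->
     #|[set q | M p q]| = 1).

Definition circE (TG TA : finType) (eA : rel TA) (a : TA) (M : rel (circV TG a))
  : rel (circV TG a) :=
  fun p q => (((val p).1 == (val q).1) && eA (val p).2 (val q).2) || M p q.

Definition conv_step (T : finType) (e : rel T) (S : {set T}) : {set T} :=
  S :|: [set v | 2 <= #|[set w in S | e v w]|].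

Definition conversion_set2 (T : finType) (e : rel T) (S0 : {set T}) : Prop :=
  exists t, iter t (conv_step e) S0 = [set: T].

Definition pbool (P : Prop) : bool :=
  if excluded_middle_informative P then true else false.

Lemma c2_exists (T : finType) (e : rel T) :
  exists n, pbool (exists S, conversion_set2 e S /\ #|S| = n).
Proof.
exists #|[set: T]|; rewrite /pbool.
case: excluded_middle_informative => // H; exfalso; apply: H.
by exists [set: T]; split => //; exists 0.
Qed.

Definition c2 (T : finType) (e : rel T) : nat := ex_minn (c2_exists e).

From mathcomp Require Import all_boot zify.
From Stdlib Require Import ClassicalDescription.

(* Rank the vertices of a graph by the step at which a 2-conversion set S
   activates them: every vertex outside S has at least two neighbours of
   strictly smaller rank.  In a cubic graph of order m, orienting the edges
   towards the larger rank gives every non-seed vertex in-degree at least 2,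
   hence out-degree at most 1, and the last vertex out-degree 0; summing
   in- and out-degrees shows that there are more than m/4 seeds.
   In G o A^-, a vertex of the copy A^-_v has at most one neighbour outside
   its copy, and it has one exactly when it is adjacent to a in A.  Giving a
   rank 0 therefore turns the ranking of S, read inside A^-_v, into a ranking
   of A with seeds a and the vertices of S in A^-_v.  So S meets every copy in
   at least r vertices, c_2(G o A^-) >= n r, and n r is exactly the bound. *)

Set Implicit Arguments.
Unset Strict Implicit.
Unset Printing Implicit Defensive.

Definition lower_nbhd (T : finType) (e : rel T) (tau : T -> nat) (x : T) : {set T} :=
  [set y | e x y && (tau y < tau x)].

Definition activation_time (T : finType) (e : rel T) (X : {set T}) (tau : T -> nat) :=
  (forall x, x \in X -> tau x = 0) /\
  (forall x, x \notin X -> 2 <= #|lower_nbhd e tau x|).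

Lemma card_set_sum (T : finType) (P : pred T) : #|[set y | P y]| = \sum_y P y.
Proof. by rewrite -sum1dep_card big_mkcond. Qed.

Section ActivationCount.

Variables (T : finType) (e : rel T) (tau : T -> nat).

Lemma sum_card_lower_upper : symmetric e ->
  \sum_x #|lower_nbhd e tau x| = \sum_x #|[set y | e x y && (tau x < tau y)]|.
Proof.
move=> e_sym; under eq_bigr do rewrite card_set_sum; rewrite exchange_big /=.
by apply: eq_bigr => x _; rewrite card_set_sum; apply: eq_bigr => y _; rewrite e_sym.
Qed.

Lemma card_lower_upper x : cubic e ->
  #|lower_nbhd e tau x| + #|[set y | e x y && (tau x < tau y)]| <= 3.
Proof.
move=> [_ deg3]; rewrite -cardsUI -(deg3 x).
have -> : lower_nbhd e tau x :&: [set y | e x y && (tau x < tau y)] = set0.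
  by apply/setP => y; rewrite !inE; case: ltngtP; rewrite ?andbF.
rewrite cards0 addn0; apply/subset_leq_card/subsetP => y.
by rewrite !inE -andb_orr => /andP[].
Qed.

Lemma cubic_activation_card X : cubic e -> 0 < #|T| -> activation_time e X tau ->
  #|T| < 4 * #|X|.
Proof.
move=> cub T0 [_ lower2].
pose upper x := #|[set y | e x y && (tau x < tau y)]|.
have [x1 _] := card_gt0P T0.
pose x0 := [arg max_(x > x1) tau x].
have upper_x0 : upper x0 = 0.
  rewrite /upper /x0; case: arg_maxnP => // x _ max_x.
  apply/eqP; rewrite cards_eq0; apply/eqP/setP => y.
  by rewrite !inE ltnNge (max_x y isT : tau y <= tau x) andbF.
have upper_le x : upper x <= 1 + 2 * (x \in X).
  have := card_lower_upper x cub; case: (boolP (x \in X)) => [_|/lower2]; rewrite /upper; lia.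
have lowerN : 2 * #|~: X| <= \sum_x #|lower_nbhd e tau x|.
  rewrite mulnC -sum_nat_const (bigID (mem (~: X)) xpredT) /=.
  by apply: leq_trans (leq_addr _ _); apply: leq_sum => x; rewrite inE => /lower2.
have upperT : \sum_x upper x + 1 <= #|T| + 2 * #|X|.
  rewrite (bigD1 x0) //= upper_x0 add0n.
  have : \sum_(x | x != x0) upper x <= \sum_(x | x != x0) (1 + 2 * (x \in X)).
    by apply: leq_sum => x _; apply: upper_le.
  have : \sum_x (1 + 2 * (x \in X)) = #|T| + 2 * #|X|.
    rewrite big_split /= sum1_card -big_distrr /= -card_set_sum.
    by congr (_ + 2 * _); apply: eq_card => x; rewrite inE.
  rewrite (bigD1 x0) //=; lia.
move: upperT; rewrite /upper -(sum_card_lower_upper cub.1.1).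
have := cardsC X; lia.
Qed.

End ActivationCount.

Lemma conversion_set2_activation (T : finType) (e : rel T) (S : {set T}) :
  conversion_set2 e S -> exists tau, activation_time e S tau.
Proof.
move=> [t0 conv_t0].
have reached x : exists t, x \in iter t (conv_step e) S by exists t0; rewrite conv_t0 inE.
pose tau x := ex_minn (reached x).
have tau_min x t : x \in iter t (conv_step e) S -> tau x <= t.
  by rewrite /tau; case: ex_minnP => k _ min_k /min_k.
have tau_reached x : x \in iter (tau x) (conv_step e) S by rewrite /tau; case: ex_minnP.
exists tau; split=> [x xS | x xNS].
  by apply/eqP; rewrite -leqn0; apply: tau_min.
move: (tau_reached x) (tau_min x); case tx: (tau x) => [|k] /=; first by rewrite (negbTE xNS).
rewrite inE => /orP[/[swap] /[apply]|]; first by rewrite ltnn.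
rewrite inE => /leq_trans le2 _; apply/le2/subset_leq_card/subsetP => y.
by rewrite !inE tx ltnS => /andP[/tau_min -> ->].
Qed.

Lemma c2_spec (T : finType) (e : rel T) : exists2 S, conversion_set2 e S & #|S| = c2 e.
Proof.
rewrite /c2; case: ex_minnP => m; rewrite /pbool.
by case: excluded_middle_informative => // -[S [convS cardS]] _ _; exists S.
Qed.

Section Copy.

Variables (TG TA : finType) (eG : rel TG) (eA : rel TA) (a : TA).
Variable M : rel (circV TG a).
Hypotheses (eG_irr : irreflexive eG) (cubA : cubic eA) (matchM : circ_matching eG eA M).

Lemma deg2_in_Aminus_adj x : deg2_in_Aminus eA a x -> eA x a.
Proof.
case/andP=> _ /eqP card2; apply/negPn/negP => xNa.
suff : #|[set y | eA x y && (y != a)]| = 3 by rewrite card2.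
rewrite -(cubA.2 x); apply: eq_card => y; rewrite !inE.
by case: eqP => [->|_]; rewrite ?(negbTE xNa) ?andbT ?andbF.
Qed.

Lemma card_added_nbhd p : #|[set q | M p q]| <= 1.
Proof.
have [_ [onM [_ degM]]] := matchM.
case deg2: (deg2_in_Aminus eA a (val p).2); first by rewrite degM.
rewrite (_ : [set q | M p q] = set0) ?cards0 //.
by apply/setP => q; rewrite !inE; apply/negP => /onM[_]; rewrite deg2.
Qed.

Lemma circE_other_copy p q : (val p).1 != (val q).1 -> circE eA M p q -> M p q.
Proof. by rewrite /circE => /negbTE ->. Qed.

Variable v : TG.

Definition copy_part (S : {set circV TG a}) : {set circV TG a} :=
  [set p in S | (val p).1 == v].

Definition copy_proj (q : circV TG a) : TA := if (val q).1 == v then (val q).2 else a.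

Definition copy_time (tau : circV TG a -> nat) (x : TA) : nat :=
  oapp tau 0 (insub (v, x)).

Lemma copy_time_val tau q : (val q).1 = v -> copy_time tau (val q).2 = tau q.
Proof. by rewrite /copy_time => <-; rewrite -surjective_pairing valK. Qed.

Lemma copy_time_a tau : copy_time tau a = 0.
Proof. by rewrite /copy_time insubN //= eqxx. Qed.

Lemma copy_proj_edge p q : (val p).1 = v -> circE eA M p q -> eA (val p).2 (copy_proj q).
Proof.
have [_ [onM _]] := matchM.
rewrite /copy_proj => pv; case: eqP => [qv|/eqP qNv].
  by case/orP=> [/andP[] //|/onM[]]; rewrite pv qv eG_irr.
have pqN : (val p).1 != (val q).1 by rewrite pv eq_sym.
by move=> /(circE_other_copy pqN)/onM[_ /deg2_in_Aminus_adj].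
Qed.

Lemma copy_proj_inj p : (val p).1 = v -> {in [set q | circE eA M p q] &, injective copy_proj}.
Proof.
move=> pv q1 q2; rewrite !inE /copy_proj.
case: eqP => [q1v|/eqP q1Nv]; case: eqP => [q2v|/eqP q2Nv] pq1 pq2.
- move=> q12; apply: val_inj.
  by rewrite [val q1]surjective_pairing [val q2]surjective_pairing q1v q2v q12.
- by move=> q1a; have := valP q1; rewrite q1a eqxx.
- by move=> q2a; have := valP q2; rewrite -q2a eqxx.
rewrite -pv eq_sym in q1Nv; rewrite -pv eq_sym in q2Nv => _.
move: (circE_other_copy q1Nv pq1) (circE_other_copy q2Nv pq2).
move/card_le1_eqP: (card_added_nbhd p) => eqM Mq1 Mq2.
by apply: eqM; rewrite inE.
Qed.

Lemma copy_activation_time S tau : activation_time (circE eA M) S tau ->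
  activation_time eA (a |: copy_proj @: copy_part S) (copy_time tau).
Proof.
move=> [seed0 lower2]; split=> x.
  case/setU1P=> [->|/imsetP[p]]; first exact: copy_time_a.
  by rewrite inE => /andP[pS /eqP pv] ->; rewrite /copy_proj pv eqxx copy_time_val // seed0.
rewrite in_setU1 negb_or => /andP[xNa xNS].
pose p : circV TG a := exist _ (v, x) xNa.
have pv : (val p).1 = v by [].
have pNS : p \notin S.
  by apply: contra xNS => pS; apply/imsetP; exists p; rewrite /copy_proj ?inE ?pS eqxx.
have lower_p := lower2 p pNS.
have tau_p : 0 < tau p.
  have [q] : exists q, q \in lower_nbhd (circE eA M) tau p by apply/card_gt0P; lia.
  by rewrite inE => /andP[_ /(leq_ltn_trans (leq0n _))].
apply: (leq_trans lower_p).
have inj : {in lower_nbhd (circE eA M) tau p &, injective copy_proj}.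
  by apply: sub_in2 (copy_proj_inj pv) => q; rewrite !inE => /andP[].
rewrite -(card_in_imset inj); apply/subset_leq_card/subsetP => y /imsetP[q].
rewrite inE => /andP[pq tq] ->; rewrite inE (copy_proj_edge pv pq) /=.
rewrite -[x]/(val p).2 copy_time_val // /copy_proj.
by case: eqP => [/copy_time_val ->|_]; rewrite ?copy_time_a.
Qed.

Lemma card_copy_part S tau r : #|TA| = 4 * r ->
  activation_time (circE eA M) S tau -> r <= #|copy_part S|.
Proof.
move=> cardA actS.
have A0 : 0 < #|TA| by apply/card_gt0P; exists a.
have seeds : #|a |: copy_proj @: copy_part S| <= 1 + #|copy_part S|.
  by rewrite cardsU1; apply: leq_add (leq_b1 _) (leq_imset_card _ _).
have := cubic_activation_card cubA A0 (copy_activation_time actS).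
rewrite cardA; lia.
Qed.

End Copy.

Lemma card_circV (TG TA : finType) (a : TA) : #|{: circV TG a}| = #|TG| * #|TA|.-1.
Proof.
rewrite card_sig -(cardsC1 a) -cardsT -cardsX; apply: eq_card => -[u x].
by rewrite !inE.
Qed.

Lemma card_copy_parts (TG TA : finType) (a : TA) (S : {set circV TG a}) :
  #|S| = \sum_v #|copy_part v S|.
Proof.
rewrite -sum1_card (partition_big (fun p => (val p).1) xpredT) //=.
by apply: eq_bigr => v _; rewrite sum1dep_card.
Qed.

Lemma ceil_floor_sum n r : 2 <= n -> 0 < r ->
  (n * (4 * r).-1 + 2 + 3) %/ 4 + (n - 2) %/ 4 = n * r.
Proof.
move=> n2 r0; have : n * (4 * r).-1 + n = 4 * (n * r).
  by rewrite -mulnSr prednK ?muln_gt0 // mulnCA.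
move: (n * _) (n * r) => m k; lia.
Qed.

Theorem proposition5p16 (TG TA : finType) (eG : rel TG) (eA : rel TA) (r : nat)
  (a : TA) (M : rel (circV TG a)) :
  cubic eG -> 6 <= #|TG| ->
  cubic eA -> 0 < r -> #|TA| = 4 * r ->
  circ_matching eG eA M ->
  (#|{: circV TG a}| + 2 + 3) %/ 4 + (#|TG| - 2) %/ 4 <= c2 (circE eA M).
Proof.
move=> [[_ eG_irr] _] n6 cubA r0 cardA matchM.
have [S convS <-] := c2_spec (circE eA M).
have [tau actS] := conversion_set2_activation convS.
have n2 : 2 <= #|TG| by apply: leq_trans n6.
rewrite card_circV cardA ceil_floor_sum // card_copy_parts.
apply: (@leq_trans (\sum_(v : TG) r)); first by rewrite sum_nat_const cardT -cardE.
by apply: leq_sum => v _; apply: (card_copy_part eG_irr cubA matchM v cardA actS).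
Qed.
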